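(* Let $B\in\Gamma^q_u$ be an affine binarization polytope. Then there exists a linear binarization polytope $B'\in\Gamma^q_u$ such that $B'=h(B)$ for some unimodular transformation $h:\mathbb{R}^{1+q}\to\mathbb{R}^{1+q}$.
   Context: For positive integers $q,u$, $\Gamma^q_u$ is the set of rational polytopes $B\subseteq\{(x,z)\in\mathbb{R}\times[0,1]^q:0\le x\le u\}$ with $\operatorname{proj}_x(B\cap(\mathbb{R}\times\{0,1\}^q))=\{0,1,\dots,u\}$ (binarization polytopes). $B$ is affine if there are $\alpha\in\mathbb{R}^q$ and $\alpha_0\in\mathbb{R}$ with $x=\alpha^Tz+\alpha_0$ for all $(x,z)\in B$; it is linear if this holds with $\alpha_0=0$. A unimodular transformation of $\mathbb{R}^N$ is a map $y\mapsto Uy+v$ with $U$ an integral $N\times N$ matrix of determinant $\pm1$ and $v\in\mathbb{Z}^N$. *)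

(* Points of R^{1+q} are column vectors 'cV[R]_(1 + q);
   coordinate lshift q ord0 is x, coordinate rshift 1 j is z_j. *)
From HB Require Import structures.
From mathcomp Require Import all_boot all_order all_algebra.
From mathcomp Require Import reals.
Set Implicit Arguments. Unset Strict Implicit. Unset Printing Implicit Defensive.
Import Order.TTheory GRing.Theory Num.Theory.
Local Open Scope ring_scope.

Section Defs.
Variable R : realType.
Variable q : nat.

Definition pt := 'cV[R]_(1 + q).

Definition xc (p : pt) : R := p (lshift q ord0) 0.
Definition zc (p : pt) (j : 'I_q) : R := p (rshift 1 j) 0.

Definition is_rat (r : R) : Prop := exists c : rat, r = ratr c.

Definition conv_hull (V : seq pt) (p : pt) : Prop :=
  exists lam : 'I_(size V) -> R,
    (forall i, 0 <= lam i) /\ \sum_i lam i = 1 /\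
    p = \sum_i lam i *: V`_i.

Definition rational_polytope (B : pt -> Prop) : Prop :=
  exists V : seq pt,
    (forall v, v \in V -> forall i j, is_rat (v i j)) /\
    (forall p, B p <-> conv_hull V p).

Definition binarization_polytope (u : nat) (B : pt -> Prop) : Prop :=
  rational_polytope B /\
  (forall p, B p -> 0 <= xc p <= u%:R /\ (forall j, 0 <= zc p j <= 1)) /\
  (forall x : R,
     (exists p, B p /\ xc p = x /\ (forall j, zc p j = 0 \/ zc p j = 1)) <->
     (exists k : nat, (k <= u)%N /\ x = k%:R)).

Definition affine_bp (B : pt -> Prop) : Prop :=
  exists (alpha : 'I_q -> R) (alpha0 : R),
    forall p, B p -> xc p = \sum_j alpha j * zc p j + alpha0.

Definition linear_bp (B : pt -> Prop) : Prop :=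
  exists alpha : 'I_q -> R,
    forall p, B p -> xc p = \sum_j alpha j * zc p j.

Definition unimodular (U : 'M[int]_(1 + q)) : Prop :=
  \det U = 1 \/ \det U = -1.

Definition utrans (U : 'M[int]_(1 + q)) (v : 'cV[int]_(1 + q)) (y : pt) : pt :=
  map_mx intr U *m y + map_mx intr v.

End Defs.

(* Pick a point p0 of B with x = 0 and binary z, which exists since 0 is in
   the binary section.  Reflecting z_j to 1 - z_j for every j with
   z_j(p0) = 1 is a unimodular map fixing x, preserving the unit cube and
   its vertices, and sending p0 to the origin; the affine relation
   x = alpha^T z + alpha0 then passes through the origin, so it is linear. *)
From HB Require Import structures.
From mathcomp Require Import all_boot all_order all_algebra.
From mathcomp Require Import reals ring lra.
Set Implicit Arguments. Unset Strict Implicit. Unset Printing Implicit Defensive.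
Import Order.TTheory GRing.Theory Num.Theory.
Local Open Scope ring_scope.

Lemma sum_cast_ord (T : nmodType) n m (E : m = n) (F : 'I_n -> T) :
  \sum_(i < m) F (cast_ord E i) = \sum_(i < n) F i.
Proof. by case: n / E F => F; under eq_bigr do rewrite cast_ord_id. Qed.

Section AffineImages.
Variables (R : realType) (q : nat).
Implicit Types (V : seq (pt R q)) (p y : pt R q) (B : pt R q -> Prop).

Definition image_set (f : pt R q -> pt R q) B y : Prop := exists p, B p /\ y = f p.

Definition preserves_affine_comb (f : pt R q -> pt R q) : Prop :=
  forall n (lam : 'I_n -> R) (w : 'I_n -> pt R q),
    \sum_i lam i = 1 -> f (\sum_i lam i *: w i) = \sum_i lam i *: f (w i).

Lemma utrans_affine_comb U v : preserves_affine_comb (utrans U v).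
Proof.
move=> n lam w lam1; rewrite /utrans mulmx_sumr.
under [RHS]eq_bigr do rewrite scalerDr scalemxAr.
by rewrite big_split /= -scaler_suml lam1 scale1r.
Qed.

Lemma conv_hull_map f V y : preserves_affine_comb f ->
  conv_hull (map f V) y <-> image_set f (conv_hull V) y.
Proof.
move=> f_aff; have E := size_map f V.
have nthE (i : 'I_(size V)) : (map f V)`_i = f V`_i by rewrite (nth_map 0).
split.
- case=> lam [lam0 [lam1 ->]].
  pose mu i := lam (cast_ord (esym E) i).
  have mu1 : \sum_i mu i = 1 by rewrite sum_cast_ord.
  exists (\sum_i mu i *: V`_i); split; first by exists mu; split=> // i; apply: lam0.
  rewrite f_aff // -(sum_cast_ord (esym E)).
  by apply: eq_bigr => i _; rewrite nthE.
- case=> _ [[lam [lam0 [lam1 ->]]] ->].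
  exists (fun i => lam (cast_ord E i)); split=> //; split; first by rewrite sum_cast_ord.
  rewrite f_aff // -(sum_cast_ord E); apply: eq_bigr => i _.
  by rewrite -(nthE (cast_ord E i)).
Qed.

Lemma is_rat_utrans U v y :
  (forall i j, is_rat (y i j)) -> forall i j, is_rat (utrans U v y i j).
Proof.
move=> y_rat; have [c cE] : exists c : 'I_(1 + q) -> rat, forall i, y i 0 = ratr (c i).
  apply: (fin_all_exists (P := fun i (c : rat) => y i 0 = ratr c)) => i.
  by have [c ->] := y_rat i 0; exists c.
move=> i j; rewrite (ord1 j) !mxE; under eq_bigr do rewrite mxE cE.
exists (\sum_k (U i k)%:~R * c k + (v i 0)%:~R).
rewrite rmorphD rmorph_sum /= ratr_int; congr (_ + _).
by apply: eq_bigr => k _; rewrite rmorphM /= ratr_int.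
Qed.

Lemma rational_polytope_utrans U v B :
  rational_polytope B -> rational_polytope (image_set (utrans U v) B).
Proof.
case=> V [V_rat BE]; exists (map (utrans U v) V); split.
  by move=> _ /mapP [w wV ->]; apply: is_rat_utrans; apply: V_rat.
move=> y; rewrite conv_hull_map; last exact: utrans_affine_comb.
by split=> -[p [Bp ->]]; exists p; split=> //; apply/BE.
Qed.

End AffineImages.

Section CubeReflection.
Variables (R : realType) (q : nat) (s : 'I_q -> bool).
Implicit Types (p : pt R q) (B : pt R q -> Prop).

Definition reflected_coord (i : 'I_(1 + q)) : bool :=
  if split i is inr j then s j else false.

Definition zflip_mx : 'M[int]_(1 + q) :=
  diag_mx (\row_i (if reflected_coord i then -1 else 1)).

Definition zflip_vec : 'cV[int]_(1 + q) :=
  \col_i (if reflected_coord i then 1 else 0).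

Definition zflip p : pt R q := utrans zflip_mx zflip_vec p.

Lemma zflipE p i :
  zflip p i 0 = if reflected_coord i then 1 - p i 0 else p i 0.
Proof.
rewrite /zflip /utrans /zflip_mx map_diag_mx mul_diag_mx !mxE.
by case: reflected_coord; rewrite /= ?rmorphN ?rmorph1 ?rmorph0; ring.
Qed.

Lemma xc_zflip p : xc (zflip p) = xc p.
Proof. by rewrite /xc zflipE /reflected_coord (unsplitK (inl ord0)). Qed.

Lemma zc_zflip p j : zc (zflip p) j = if s j then 1 - zc p j else zc p j.
Proof. by rewrite /zc zflipE /reflected_coord (unsplitK (inr j)). Qed.

Lemma unimodular_zflip_mx : unimodular zflip_mx.
Proof.
rewrite /unimodular det_diag.
apply: (big_ind (fun x : int => x = 1 \/ x = -1)); first by left.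
  by move=> x y [->|->] [->|->]; rewrite ?mulr1 ?mulrN1 ?opprK; auto.
by move=> i _; rewrite mxE; case: reflected_coord; auto.
Qed.

Lemma binary_zc_zflip p j :
  (zc (zflip p) j = 0 \/ zc (zflip p) j = 1) <-> (zc p j = 0 \/ zc p j = 1).
Proof. by rewrite zc_zflip; case: (s j) => //; split=> -[] E; [right | left | right | left]; lra. Qed.

Lemma binarization_polytope_zflip u B :
  binarization_polytope u B -> binarization_polytope u (image_set zflip B).
Proof.
case=> B_rat [B_box B_bin]; split; first exact: rational_polytope_utrans.
split.
- move=> _ [p [Bp ->]]; have [x_box z_box] := B_box p Bp.
  rewrite xc_zflip; split=> // j; rewrite zc_zflip.
  have /andP[z0 z1] := z_box j; case: (s j) => //; apply/andP; split; lra.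
- move=> x; rewrite -B_bin; split.
  + case=> _ [[p [Bp ->]] [<- y_bin]]; exists p; split=> //.
    by split; [rewrite xc_zflip | move=> j; apply/(binary_zc_zflip p j)].
  + case=> p [Bp [<- p_bin]]; exists (zflip p); split; first by exists p.
    by split; [apply: xc_zflip | move=> j; apply/binary_zc_zflip].
Qed.

Lemma linear_bp_zflip B alpha alpha0 p0 :
  (forall p, B p -> xc p = \sum_j alpha j * zc p j + alpha0) ->
  B p0 -> xc p0 = 0 -> (forall j, zc p0 j = (s j)%:R) ->
  linear_bp (image_set zflip B).
Proof.
move=> B_aff Bp0 x0 z0.
exists (fun j => if s j then - alpha j else alpha j) => _ [p [Bp ->]].
have alpha0E : alpha0 = - \sum_j alpha j * (s j)%:R.
  by move: (B_aff _ Bp0); rewrite x0; under eq_bigr do rewrite z0; lra.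
rewrite xc_zflip B_aff // alpha0E -sumrB; apply: eq_bigr => j _.
by rewrite zc_zflip; case: (s j) => /=; ring.
Qed.

End CubeReflection.

Theorem proposition2 (R : realType) (q u : nat) (hq : (0 < q)%N) (hu : (0 < u)%N)
    (B : pt R q -> Prop) :
  binarization_polytope u B -> affine_bp B ->
  exists B' : pt R q -> Prop,
    binarization_polytope u B' /\ linear_bp B' /\
    exists (U : 'M[int]_(1 + q)) (v : 'cV[int]_(1 + q)),
      unimodular U /\
      (forall y, B' y <-> exists p, B p /\ y = utrans U v p).
Proof.
move=> B_bp [alpha [alpha0 B_aff]].
have [p0 [Bp0 [x0 p0_bin]]] : exists p0, B p0 /\ xc p0 = 0 /\
    (forall j, zc p0 j = 0 \/ zc p0 j = 1).
  by apply/(B_bp.2.2 0); exists 0%N.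
pose s j := zc p0 j == 1.
have z0 j : zc p0 j = (s j)%:R.
  by rewrite /s; case: (p0_bin j) => ->; rewrite ?eqxx // eq_sym oner_eq0.
exists (image_set (zflip s) B); split; first exact: binarization_polytope_zflip.
split; first exact: linear_bp_zflip B_aff Bp0 x0 z0.
by exists (zflip_mx s), (zflip_vec s); split; first exact: unimodular_zflip_mx.
Qed.
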